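(* Let $\mathfrak l$ be a real finite-dimensional nilpotent admissible Lie algebra with $\dim\mathfrak l'=2$ and $\mathfrak l'\subset\mathfrak z(\mathfrak l)$, having a basis $X_1,\dots,X_n,Y,Z$ ($n\ge4$) with $[X_1,X_2]=Y$, $[X_1,X_3]=Z$, $[X_2,X_3]=0$, $[X_1,X_4]=0$, $[X_2,X_4]=Z$, and $[X_1,X_j]=[X_2,X_j]=0$ for $j\ge5$. Then $[X_3,X_j]=0$ for all $j\ge5$.
   Context: For a Lie algebra $\mathfrak l$: $\mathfrak l^1=\mathfrak l$, $\mathfrak l^{k+1}=[\mathfrak l,\mathfrak l^k]$, $\mathfrak l'=\mathfrak l^2$, $\mathfrak z(\mathfrak l)$ the centre. An orthogonal $\mathfrak l$-module $(\rho,\mathfrak a)$ is a finite-dimensional real vector space with a nondegenerate symmetric bilinear form $\langle\cdot,\cdot\rangle_{\mathfrak a}$ and a representation by skew-adjoint maps. $C^p(\mathfrak l,\mathfrak a)$: alternating $p$-linear maps with Chevalley–Eilenberg differential $d$; $C^p(\mathfrak l)=C^p(\mathfrak l,\mathbb R)$; $\langle\alpha\wedge\beta\rangle$ is the wedge product followed by contraction with $\langle\cdot,\cdot\rangle_{\mathfrak a}$. $\mathcal Z^2_Q(\mathfrak l,\mathfrak a)=\{(\alpha,\gamma)\in C^2(\mathfrak l,\mathfrak a)\oplus C^3(\mathfrak l): d\alpha=0,d\gamma=\frac12\langle\alpha\wedge\alpha\rangle\}$; the group $C^1(\mathfrak l,\mathfrak a)\oplus C^2(\mathfrak l)$ with $(\tau_1,\sigma_1)*(\tau_2,\sigma_2)=(\tau_1+\tau_2,\sigma_1+\sigma_2+\frac12\langle\tau_1\wedge\tau_2\rangle)$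 acts by $(\alpha,\gamma)(\tau,\sigma)=(\alpha+d\tau,\gamma+d\sigma+\langle(\alpha+\frac12d\tau)\wedge\tau\rangle)$; $\mathcal H^2_Q(\mathfrak l,\mathfrak a)$ is the orbit set. Admissibility: for semisimple $(\rho,\mathfrak a)$, with $\mathfrak l^{m+2}=0$, $\mathfrak l_{(0)}=\mathfrak z(\mathfrak l)\cap\ker\rho$, $\mathfrak l_{(k)}=\mathfrak z(\mathfrak l)\cap\mathfrak l^{k+1}$ ($k\ge1$), and a representative with $\alpha(\mathfrak l,\mathfrak l)\subset\mathfrak a^{\mathfrak l}$, a class is admissible iff for all $0\le k\le m$: $(A_k)$ whenever $L_0\in\mathfrak l_{(k)}$ and there are $A_0\in\mathfrak a$, $Z_0\in(\mathfrak l^{k+1})^*$ with $\alpha(L,L_0)=0$ and $\gamma(L,L_0,\cdot)=-\langle A_0,\alpha(L,\cdot)\rangle_{\mathfrak a}+\langle Z_0,[L,\cdot]\rangle$ on $\mathfrak l^{k+1}$ for all $L$, then $L_0=0$; $(B_k)$ $\alpha$ applied to the kernel of the bracket map $\mathfrak l\otimes\mathfrak l^{k+1}\to\mathfrak l$ is a nondegenerate subspace of $\mathfrak a$. $\mathfrak l$ is admissible if some semisimple orthogonal module admits an admissible class. *)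

From HB Require Import structures.
From mathcomp Require Import all_boot all_order all_algebra.
From mathcomp Require Import reals.
Set Implicit Arguments. Unset Strict Implicit. Unset Printing Implicit Defensive.
Import Order.TTheory GRing.Theory Num.Theory.
Local Open Scope ring_scope.

Section LieDefs.
Variables (R : realType) (d : nat).
Local Notation V := 'rV[R]_d.
Variable br : V -> V -> V.

(* Lie algebra axioms: bilinear (linearity in the 1st slot + antisymmetry),
   antisymmetric, Jacobi. *)
Definition lie_algebra : Prop :=
  [/\ forall (a : R) (x y z : V), br (a *: x + y) z = a *: br x z + br y z,
      forall x y : V, br x y = - br y x &
      forall x y z : V, br x (br y z) + br y (br z x) + br z (br x y) = 0].

(* in_lcs k v  <->  v belongs to l^{k+1}  (lower central series, l^1 = l,
   l^{k+1} = [l, l^k] = span of brackets = set of finite sums of brackets). *)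
Fixpoint in_lcs (k : nat) (v : V) : Prop :=
  match k with
  | 0 => True
  | k'.+1 => exists s : seq (V * V),
      (forall q, q \in s -> in_lcs k' q.2) /\ v = \sum_(q <- s) br q.1 q.2
  end.

Definition nilpotent_lie : Prop := exists m, forall v, in_lcs m v -> v = 0.

Definition in_center (x : V) : Prop := forall y, br x y = 0.

Definition sub_dim (P : V -> Prop) (k : nat) : Prop :=
  exists B : 'M[R]_(k, d), row_free B /\ forall v, P v <-> (v <= B)%MS.

Variable p : nat.
Local Notation A := 'rV[R]_p.
Variables (fm : A -> A -> R) (act : V -> A -> A).

Definition orth_module : Prop :=
  (forall (a : R) u v w, fm (a *: u + v) w = a * fm u w + fm v w) /\
      (forall u v, fm u v = fm v u) /\
      (forall v, (forall u, fm u v = 0) -> v = 0) /\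
      (forall (a : R) x y v, act (a *: x + y) v = a *: act x v + act y v) /\
      (forall (a : R) x u v, act x (a *: u + v) = a *: act x u + act x v) /\
      (forall x y v, act (br x y) v = act x (act y v) - act y (act x v)) /\
      (forall x u v, fm (act x u) v = - fm u (act x v)).

Definition invariant_sub (U : 'M[R]_p) : Prop :=
  forall x u, (u <= U)%MS -> (act x u <= U)%MS.

Definition semisimple_module : Prop :=
  forall U : 'M[R]_p, invariant_sub U ->
    exists W : 'M[R]_p, invariant_sub W /\ capmx U W = 0 /\ (U + W == 1%:M)%MS.

Definition cochain2 (al : V -> V -> A) : Prop :=
  [/\ (forall (a : R) x y z, al (a *: x + y) z = a *: al x z + al y z),
      (forall (a : R) x y z, al z (a *: x + y) = a *: al z x + al z y) &
      (forall x, al x x = 0)].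

Definition cochain3 (g : V -> V -> V -> R) : Prop :=
  [/\ (forall (a : R) x y z w, g (a *: x + y) z w = a * g x z w + g y z w),
      (forall (a : R) x y z w, g z (a *: x + y) w = a * g z x w + g z y w),
      (forall (a : R) x y z w, g z w (a *: x + y) = a * g z w x + g z w y) &
      (forall x y, [/\ g x x y = 0, g x y x = 0 & g y x x = 0])].

Definition d2 (al : V -> V -> A) (x y z : V) : A :=
  act x (al y z) - act y (al x z) + act z (al x y)
  - al (br x y) z + al (br x z) y - al (br y z) x.

Definition d3 (g : V -> V -> V -> R) (x1 x2 x3 x4 : V) : R :=
  - g (br x1 x2) x3 x4 + g (br x1 x3) x2 x4 - g (br x1 x4) x2 x3
  - g (br x2 x3) x1 x4 + g (br x2 x4) x1 x3 - g (br x3 x4) x1 x2.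

(* <al /\ be> : wedge product (sum over (2,2)-shuffles) contracted with fm *)
Definition wedge22 (al be : V -> V -> A) (x1 x2 x3 x4 : V) : R :=
  fm (al x1 x2) (be x3 x4) - fm (al x1 x3) (be x2 x4) + fm (al x1 x4) (be x2 x3)
  + fm (al x2 x3) (be x1 x4) - fm (al x2 x4) (be x1 x3) + fm (al x3 x4) (be x1 x2).

Definition quad_cocycle (al : V -> V -> A) (g : V -> V -> V -> R) : Prop :=
  [/\ cochain2 al, cochain3 g,
      (forall x y z, d2 al x y z = 0) &
      (forall x1 x2 x3 x4, d3 g x1 x2 x3 x4 = wedge22 al al x1 x2 x3 x4 / 2)].

Definition l_sub (k : nat) (L : V) : Prop :=
  if k is 0 then in_center L /\ (forall v, act L v = 0)
  else in_center L /\ in_lcs k L.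

Definition cond_A (al : V -> V -> A) (g : V -> V -> V -> R) (k : nat) : Prop :=
  forall L0 : V, l_sub k L0 ->
    (exists (A0 : A) (Z0 : V -> R),
        (forall (a : R) u v, in_lcs k u -> in_lcs k v ->
            Z0 (a *: u + v) = a * Z0 u + Z0 v) /\
        (forall L : V, al L L0 = 0 /\
           forall y, in_lcs k y -> g L L0 y = - fm A0 (al L y) + Z0 (br L y))) ->
    L0 = 0.

(* al applied to ker( l (x) l^{k+1} -> l ) *)
Definition alpha_ker (al : V -> V -> A) (k : nat) (v : A) : Prop :=
  exists s : seq (V * V),
    [/\ forall q, q \in s -> in_lcs k q.2,
        \sum_(q <- s) br q.1 q.2 = 0 &
        v = \sum_(q <- s) al q.1 q.2].

Definition cond_B (al : V -> V -> A) (k : nat) : Prop :=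
  forall v, alpha_ker al k v ->
    (forall w, alpha_ker al k w -> fm v w = 0) -> v = 0.

End LieDefs.

(* l admissible: some semisimple orthogonal module admits an admissible class,
   i.e. a cocycle (al,g) with al(l,l) in a^l satisfying all (A_k),(B_k). *)
Definition admissible_lie (R : realType) (d : nat)
    (br : 'rV[R]_d -> 'rV[R]_d -> 'rV[R]_d) : Prop :=
  exists (p : nat) (fm : 'rV[R]_p -> 'rV[R]_p -> R) (act : 'rV[R]_d -> 'rV[R]_p -> 'rV[R]_p)
         (al : 'rV[R]_d -> 'rV[R]_d -> 'rV[R]_p) (g : 'rV[R]_d -> 'rV[R]_d -> 'rV[R]_d -> R),
    [/\ orth_module br fm act, semisimple_module act,
        quad_cocycle br fm act al g,
        (forall x y z, act z (al x y) = 0) &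
        forall m, (forall v, in_lcs br m.+1 v -> v = 0) ->
          forall k, (k <= m)%N -> cond_A br fm act al g k /\ cond_B br fm al k].

Definition fam_mx (R : realType) (d n : nat) (X : nat -> 'rV[R]_d) (Y Z : 'rV[R]_d)
  : 'M[R]_(n.+2, d) :=
  \matrix_(i < n.+2) (if (i < n)%N then X i.+1 else if i == n :> nat then Y else Z).

From HB Require Import structures.
From mathcomp Require Import all_boot all_order all_algebra.
From mathcomp Require Import reals.
From mathcomp Require Import ring lra zify.
From Stdlib Require Import Classical.
Set Implicit Arguments. Unset Strict Implicit. Unset Printing Implicit Defensive.
Import Order.TTheory GRing.Theory Num.Theory.
Local Open Scope ring_scope.

(* Write [X3, Xk] = aY + bZ for k >= 5.  Since l' = span(Y, Z) is central, l^3 = 0 and only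
   the admissibility conditions (A_1) and (B_1) matter.  Closedness of alpha, whose values are
   invariant, gives linear relations between the vectors alpha(Xi, Y) and alpha(Xi, Z), among
   them a alpha(Xi, Y) + b alpha(Xi, Z) = 0 for i = 1, 2, while d gamma = <alpha /\ alpha>/2
   makes <alpha(x, Y), alpha(y, Z)> symmetric in x and y.  By (B_1) a vector alpha(x, W) with
   W in l' that is orthogonal to alpha(l, Y) vanishes, so alpha(X1, .) and alpha(X2, .) vanish
   as soon as the relations make them span a totally isotropic subspace.  If (a, b) <> 0 this
   happens unless alpha(., Z) = c alpha(., Y) with c = -a/b; but then alpha(., cY - Z) = 0,
   gamma(., Z, Y) has the form <A0, alpha(., Y)>, and (A_1) for L0 = cY - Z forces cY = Z. *)

Section LinearFor.
Variables (R : pzRingType) (U : lmodType R) (W : zmodType).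
Variables (s : GRing.Scale.law R W) (f : U -> W).
Hypothesis f_lin : linear_for s f.

Lemma linear_forB x y : f (x - y) = f x - f y.
Proof. exact: zmod_morphism_linear. Qed.

Lemma linear_for0 : f 0 = 0.
Proof. by have := linear_forB 0 0; rewrite !subrr. Qed.

Lemma linear_forN x : f (- x) = - f x.
Proof. by rewrite -[- x]sub0r linear_forB linear_for0 sub0r. Qed.

Lemma linear_forD x y : f (x + y) = f x + f y.
Proof. by rewrite -{1}[y]opprK linear_forB linear_forN opprK. Qed.

Lemma linear_forZ a x : f (a *: x) = s a (f x).
Proof. exact: scalable_linear. Qed.

End LinearFor.

Section NondegenerateForm.
Variables (F : fieldType) (A : lmodType F) (fm : A -> A -> F).
Hypothesis fm_linl : forall v, scalar (fm^~ v).
Hypothesis fm_sym : forall u v, fm u v = fm v u.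
Hypothesis fm_nondeg : forall v, (forall u, fm u v = 0) -> v = 0.

Let fm0l v : fm 0 v = 0. Proof. by rewrite (linear_for0 (fm_linl v)). Qed.
Let fmZl a u v : fm (a *: u) v = a * fm u v. Proof. by rewrite (linear_forZ (fm_linl v)). Qed.
Let fmDl u w v : fm (u + w) v = fm u v + fm w v. Proof. by rewrite (linear_forD (fm_linl v)). Qed.
Let fmBl u w v : fm (u - w) v = fm u v - fm w v. Proof. by rewrite (linear_forB (fm_linl v)). Qed.
Let fm0r u : fm u 0 = 0. Proof. by rewrite fm_sym fm0l. Qed.
Let fmZr a u v : fm u (a *: v) = a * fm u v. Proof. by rewrite !(fm_sym u) fmZl. Qed.
Let fmBr u v w : fm u (v - w) = fm u v - fm u w. Proof. by rewrite !(fm_sym u) fmBl. Qed.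

Lemma form_solve u r : (u = 0 -> r = 0) -> exists x, fm x u = r.
Proof.
have [-> r0|u_neq0 _] := eqVneq u 0; first by exists 0; rewrite fm0l r0.
have : ~ (forall x, fm x u = 0) by move=> fm_u0; move/eqP: u_neq0; apply; exact: fm_nondeg.
move=> /not_all_ex_not [x0 /eqP x0u].
by exists ((r / fm x0 u) *: x0); rewrite fmZl mulfVK.
Qed.

Lemma form_solve2 u1 u2 r1 r2 :
  (forall t1 t2, t1 *: u1 + t2 *: u2 = 0 -> t1 * r1 + t2 * r2 = 0) ->
  exists x, fm x u1 = r1 /\ fm x u2 = r2.
Proof.
move=> compat.
have [u1_0|u1_neq0] := eqVneq u1 0.
  have r1_0 : r1 = 0.
    by have := compat 1 0; rewrite u1_0 scaler0 scale0r addr0 mul1r mul0r addr0; apply.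
  have [|x xu2] := @form_solve u2 r2.
    by move=> u2_0; have := compat 0 1; rewrite u2_0 scale0r scaler0 addr0 mul0r mul1r add0r; apply.
  by exists x; rewrite u1_0 fm0r r1_0.
have [x1 x1u1] : exists x1, fm x1 u1 = 1.
  by apply: form_solve => /eqP; rewrite (negPf u1_neq0).
pose l := fm x1 u2.
have [y yw] : exists y, fm y (u2 - l *: u1) = r2 - r1 * l.
  apply: form_solve => /eqP; rewrite subr_eq0 => /eqP u2_l.
  have := compat l (-1); rewrite u2_l scaleN1r subrr mulN1r mulrC => /(_ erefl) /eqP.
  by rewrite addr_eq0 => /eqP ->; rewrite opprK subrr.
exists (r1 *: x1 + y - fm y u1 *: x1).
rewrite !fmBl !fmDl !fmZl x1u1 -/l; split; first by ring.
have -> : fm y u2 = r2 - r1 * l + l * fm y u1 by rewrite -yw fmBr fmZr subrK.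
by ring.
Qed.

End NondegenerateForm.

Lemma sub_dim2_span (R : realType) (d : nat) (P : 'rV[R]_d -> Prop) (Y Z : 'rV[R]_d) :
  sub_dim P 2 -> P Y -> P Z ->
  (forall s t, s *: Y + t *: Z = 0 -> s = 0 /\ t = 0) ->
  forall w, P w -> exists s t, w = s *: Y + t *: Z.
Proof.
move=> [B [B_free PB]] PY PZ YZ_indep w Pw.
pose M : 'M[R]_(2, d) := \matrix_(i < 2) (if i == 0 :> nat then Y else Z).
have mulM (v : 'rV[R]_2) : v *m M = v 0 0 *: Y + v 0 1 *: Z.
  rewrite mulmx_sum_row !big_ord_recl big_ord0 addr0 /M !rowK /=.
  by congr (_ *: _ + _ *: _); congr (v _ _); apply: val_inj.
have M_free : row_free M.
  apply: inj_row_free => v; rewrite mulM => /YZ_indep [v0 v1].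
  apply/rowP => -[[|[|k]] hk]; rewrite mxE //=.
  - by rewrite -v0; congr (v _ _); apply: val_inj.
  - by rewrite -v1; congr (v _ _); apply: val_inj.
have MB : (M <= B)%MS.
  by apply/row_subP => i; rewrite rowK; apply/PB; case: ifP.
have BM : (B <= M)%MS.
  have := (mxrank_leqif_sup MB).2; move: M_free B_free; rewrite /row_free.
  by move=> /eqP -> /eqP -> /esym; rewrite eqxx.
have /submxP [D ->] : (w <= M)%MS by apply: submx_trans BM; apply/PB.
by exists (D 0 0), (D 0 1); rewrite mulM.
Qed.

Section Frame.
Variables (R : realType) (d n : nat) (X : nat -> 'rV[R]_d) (Y Z : 'rV[R]_d).
Local Notation F := (fam_mx n X Y Z).

Lemma fam_mx_ind (P : 'rV[R]_d -> Prop) : row_full F ->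
  P 0 -> (forall a u v, P u -> P v -> P (a *: u + v)) ->
  (forall i, (1 <= i <= n)%N -> P (X i)) -> P Y -> P Z -> forall v, P v.
Proof.
move=> F_full P0 Pcomb PX PY PZ v.
have /submxP [D ->] := submx_full v F_full.
rewrite mulmx_sum_row; elim/big_rec: _ => // i x _ Px.
apply: Pcomb => //; rewrite rowK.
by case: ifP => [i_lt_n|_]; [apply: PX | case: ifP].
Qed.

Lemma fam_mx_indepYZ s t : row_free F -> s *: Y + t *: Z = 0 -> s = 0 /\ t = 0.
Proof.
move=> F_free YZ0.
pose w : 'rV[R]_n.+2 :=
  \row_i (if i == n :> nat then s else if i == n.+1 :> nat then t else 0).
have : w *m F = 0 *m F.
  rewrite mul0mx mulmx_sum_row !big_ord_recr /= big1 ?add0r => [|i _].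
    rewrite !rowK !mxE /= ltnn eqxx ltnNge leqnSn /= eqxx.
    by have -> : (n.+1 == n) = false by lia.
  have i_lt := ltn_ord i.
  by rewrite !mxE /= (ltn_eqF i_lt) (ltn_eqF (ltnW i_lt : (i < n.+1)%N)) scale0r.
move=> /(row_free_inj F_free) /rowP w0.
have := w0 (Ordinal (ltnSn n.+1)); have := w0 (Ordinal (leqnSn n.+1)).
by rewrite !mxE /= eqxx ifN ?eqxx //; lia.
Qed.

End Frame.

Lemma scale_solve (K : fieldType) (M : lmodType K) (a b : K) (x y : M) :
  b != 0 -> a *: x + b *: y = 0 -> y = (- a / b) *: x.
Proof.
move=> b_neq0 /eqP; rewrite addrC addr_eq0 => /eqP by_ax.
by apply: (scalerI b_neq0); rewrite by_ax scalerA mulrC mulfVK // scaleNr.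
Qed.

Section Span2.
Variables (K : pzRingType) (M : lmodType K) (u1 u2 : M).

Definition span2 v := exists r1 r2, v = r1 *: u1 + r2 *: u2.

Lemma span2_0 : span2 0. Proof. by exists 0, 0; rewrite !scale0r addr0. Qed.
Lemma span2_1 : span2 u1. Proof. by exists 1, 0; rewrite scale1r scale0r addr0. Qed.
Lemma span2_2 : span2 u2. Proof. by exists 0, 1; rewrite scale1r scale0r add0r. Qed.

Lemma span2Z a v : span2 v -> span2 (a *: v).
Proof. by move=> [r1 [r2 ->]]; exists (a * r1), (a * r2); rewrite scalerDr !scalerA. Qed.

Lemma span2N v : span2 v -> span2 (- v).
Proof. by rewrite -scaleN1r; apply: span2Z. Qed.

End Span2.

Section LowerCentralSeries.
Variables (R : realType) (d : nat) (br : 'rV[R]_d -> 'rV[R]_d -> 'rV[R]_d).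

Lemma in_lcs1_br x y : in_lcs br 1 (br x y).
Proof. by exists [:: (x, y)]; rewrite big_seq1. Qed.

Lemma lcs2_eq0 : lie_algebra br -> (forall x, in_lcs br 1 x -> in_center br x) ->
  forall v, in_lcs br 2 v -> v = 0.
Proof.
move=> [_ br_anti _] central v [s [s_lcs1 ->]].
by rewrite big_seq big1 // => q /s_lcs1 q2; rewrite br_anti (central _ q2) oppr0.
Qed.

End LowerCentralSeries.

Lemma index_cases (n : nat) (P : nat -> Prop) : P 1%N -> P 2%N -> P 3%N -> P 4%N ->
  (forall k, (5 <= k <= n)%N -> P k) -> forall i, (1 <= i <= n)%N -> P i.
Proof. by move=> P1 P2 P3 P4 Pk [|[|[|[|[|i]]]]] // i_le; apply: Pk. Qed.

Section AdmissibleCocycle.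
Variables (R : realType) (d n p : nat).
Variables (br : 'rV[R]_d -> 'rV[R]_d -> 'rV[R]_d) (X : nat -> 'rV[R]_d) (Y Z : 'rV[R]_d).
Variables (fm : 'rV[R]_p -> 'rV[R]_p -> R) (act : 'rV[R]_d -> 'rV[R]_p -> 'rV[R]_p).
Variables (al : 'rV[R]_d -> 'rV[R]_d -> 'rV[R]_p).
Variables (g : 'rV[R]_d -> 'rV[R]_d -> 'rV[R]_d -> R).

Hypothesis lie : lie_algebra br.
Hypothesis orth : orth_module br fm act.
Hypothesis cocycle : quad_cocycle br fm act al g.
Hypothesis al_invariant : forall x y z, act z (al x y) = 0.
Hypothesis condA1 : cond_A br fm act al g 1.
Hypothesis condB1 : cond_B br fm al 1.
Hypothesis lcs1_dim : sub_dim (in_lcs br 1) 2.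
Hypothesis lcs1_central : forall x, in_lcs br 1 x -> in_center br x.
Hypothesis fam_free : row_free (fam_mx n X Y Z).
Hypothesis fam_full : row_full (fam_mx n X Y Z).
Hypothesis br12 : br (X 1) (X 2) = Y.
Hypothesis br13 : br (X 1) (X 3) = Z.
Hypothesis br23 : br (X 2) (X 3) = 0.
Hypothesis br14 : br (X 1) (X 4) = 0.
Hypothesis br24 : br (X 2) (X 4) = Z.
Hypothesis br12k : forall k, (5 <= k <= n)%N -> br (X 1) (X k) = 0 /\ br (X 2) (X k) = 0.

Lemma br_anti x y : br x y = - br y x. Proof. by case: lie. Qed.
Let br_linl z : linear (br^~ z). Proof. by case: lie => h _ _ a x y; apply: h. Qed.
Let brDl x y z : br (x + y) z = br x z + br y z. Proof. by rewrite (linear_forD (br_linl z)). Qed.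
Let brZl a x z : br (a *: x) z = a *: br x z. Proof. by rewrite (linear_forZ (br_linl z)). Qed.
Let brNl x z : br (- x) z = - br x z. Proof. by rewrite (linear_forN (br_linl z)). Qed.
Let br_linr z : linear (br z).
Proof. by move=> a x y; rewrite !(br_anti z) brDl brZl scalerN opprD. Qed.
Let brBr x y z : br z (x - y) = br z x - br z y. Proof. by rewrite (linear_forB (br_linr z)). Qed.
Let brZr a x z : br z (a *: x) = a *: br z x. Proof. by rewrite (linear_forZ (br_linr z)). Qed.

Lemma brxx x : br x x = 0.
Proof.
have : 2%:R *: br x x = 0 by rewrite scaler_nat mulr2n {1}br_anti addNr.
by move/eqP; rewrite scaler_eq0 pnatr_eq0 => /eqP.
Qed.

Lemma alxx x : al x x = 0. Proof. by case: cocycle => -[]. Qed.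
Let al_linl z : linear (al^~ z).
Proof. by case: cocycle => -[h _ _] _ _ _ a x y; apply: h. Qed.
Let al_linr z : linear (al z).
Proof. by case: cocycle => -[_ h _] _ _ _ a x y; apply: h. Qed.
Let al0l z : al 0 z = 0. Proof. exact: linear_for0 (al_linl z). Qed.
Let alDl x y z : al (x + y) z = al x z + al y z. Proof. by rewrite (linear_forD (al_linl z)). Qed.
Let alZl a x z : al (a *: x) z = a *: al x z. Proof. by rewrite (linear_forZ (al_linl z)). Qed.
Let alNl x z : al (- x) z = - al x z. Proof. by rewrite (linear_forN (al_linl z)). Qed.
Let alBl x y z : al (x - y) z = al x z - al y z. Proof. by rewrite (linear_forB (al_linl z)). Qed.
Let al0r z : al z 0 = 0. Proof. exact: linear_for0 (al_linr z). Qed.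
Let alDr x y z : al z (x + y) = al z x + al z y. Proof. by rewrite (linear_forD (al_linr z)). Qed.
Let alZr a x z : al z (a *: x) = a *: al z x. Proof. by rewrite (linear_forZ (al_linr z)). Qed.
Let alNr x z : al z (- x) = - al z x. Proof. by rewrite (linear_forN (al_linr z)). Qed.
Let alBr x y z : al z (x - y) = al z x - al z y. Proof. by rewrite (linear_forB (al_linr z)). Qed.

Lemma al_anti x y : al x y = - al y x.
Proof.
have := alxx (x + y); rewrite alDl !alDr !alxx add0r addr0.
by move=> /eqP; rewrite addr_eq0 => /eqP.
Qed.

Lemma g_alt x y : [/\ g x x y = 0, g x y x = 0 & g y x x = 0].
Proof. by case: cocycle => _ []. Qed.
Let g_lin1 y z : scalar (fun x => g x y z).
Proof. by case: cocycle => _ [h _ _ _] _ _ a u v; apply: h. Qed.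
Let g_lin2 x z : scalar (fun y => g x y z).
Proof. by case: cocycle => _ [_ h _ _] _ _ a u v; apply: h. Qed.
Let g_lin3 x y : scalar (g x y).
Proof. by case: cocycle => _ [_ _ h _] _ _ a u v; apply: h. Qed.
Let g0l y z : g 0 y z = 0. Proof. exact: linear_for0 (g_lin1 y z). Qed.
Let gDl x x' y z : g (x + x') y z = g x y z + g x' y z.
Proof. by rewrite (linear_forD (g_lin1 y z)). Qed.
Let gZl a x y z : g (a *: x) y z = a * g x y z. Proof. by rewrite (linear_forZ (g_lin1 y z)). Qed.
Let gNl x y z : g (- x) y z = - g x y z. Proof. by rewrite (linear_forN (g_lin1 y z)). Qed.
Let gBl x x' y z : g (x - x') y z = g x y z - g x' y z.
Proof. by rewrite (linear_forB (g_lin1 y z)). Qed.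
Let gDm x y y' z : g x (y + y') z = g x y z + g x y' z.
Proof. by rewrite (linear_forD (g_lin2 x z)). Qed.
Let gZm a x y z : g x (a *: y) z = a * g x y z. Proof. by rewrite (linear_forZ (g_lin2 x z)). Qed.
Let gNm x y z : g x (- y) z = - g x y z. Proof. by rewrite (linear_forN (g_lin2 x z)). Qed.
Let gDr x y z z' : g x y (z + z') = g x y z + g x y z'.
Proof. by rewrite (linear_forD (g_lin3 x y)). Qed.
Let gZr a x y z : g x y (a *: z) = a * g x y z. Proof. by rewrite (linear_forZ (g_lin3 x y)). Qed.
Let gNr x y z : g x y (- z) = - g x y z. Proof. by rewrite (linear_forN (g_lin3 x y)). Qed.

Lemma g_anti12 x y z : g x y z = - g y x z.
Proof.
have [+ _ _] := g_alt (x + y) z; rewrite gDl !gDm.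
have [-> _ _] := g_alt x z; have [-> _ _] := g_alt y z.
by rewrite add0r addr0 => /eqP; rewrite addr_eq0 => /eqP.
Qed.

Lemma g_anti23 x y z : g x y z = - g x z y.
Proof.
have [_ _ +] := g_alt (y + z) x; rewrite gDm !gDr.
have [_ _ ->] := g_alt y x; have [_ _ ->] := g_alt z x.
by rewrite add0r addr0 => /eqP; rewrite addr_eq0 => /eqP.
Qed.

Lemma fm_sym u v : fm u v = fm v u. Proof. by case: orth => _ []. Qed.
Lemma fm_nondeg v : (forall u, fm u v = 0) -> v = 0.
Proof. by case: orth => _ [_ [nondeg _]]; apply: nondeg. Qed.
Let fm_linl v : scalar (fm^~ v). Proof. by case: orth => h _ a u w; apply: h. Qed.
Let fm0l v : fm 0 v = 0. Proof. exact: linear_for0 (fm_linl v). Qed.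
Let fmDl u u' v : fm (u + u') v = fm u v + fm u' v.
Proof. by rewrite (linear_forD (fm_linl v)). Qed.
Let fmZl a u v : fm (a *: u) v = a * fm u v. Proof. by rewrite (linear_forZ (fm_linl v)). Qed.
Let fm0r u : fm u 0 = 0. Proof. by rewrite fm_sym fm0l. Qed.
Let fmDr u v v' : fm u (v + v') = fm u v + fm u v'. Proof. by rewrite !(fm_sym u) fmDl. Qed.
Let fmZr a u v : fm u (a *: v) = a * fm u v. Proof. by rewrite !(fm_sym u) fmZl. Qed.
Let fmNr u v : fm u (- v) = - fm u v.
Proof. by rewrite !(fm_sym u) (linear_forN (fm_linl u)). Qed.

Lemma fm_solve2 u1 u2 r1 r2 :
  (forall t1 t2, t1 *: u1 + t2 *: u2 = 0 -> t1 * r1 + t2 * r2 = 0) ->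
  exists x, fm x u1 = r1 /\ fm x u2 = r2.
Proof. exact: (@form_solve2 _ _ fm fm_linl fm_sym fm_nondeg). Qed.

Lemma lcs1Y : in_lcs br 1 Y. Proof. by rewrite -br12; apply: in_lcs1_br. Qed.
Lemma lcs1Z : in_lcs br 1 Z. Proof. by rewrite -br13; apply: in_lcs1_br. Qed.

Lemma br_lcs1r x W : in_lcs br 1 W -> br x W = 0.
Proof. by move=> /lcs1_central W_central; rewrite br_anti W_central oppr0. Qed.

Lemma brYx x : br Y x = 0. Proof. exact: lcs1_central lcs1Y x. Qed.
Lemma brZx x : br Z x = 0. Proof. exact: lcs1_central lcs1Z x. Qed.
Lemma brxY x : br x Y = 0. Proof. exact: br_lcs1r lcs1Y. Qed.
Lemma brxZ x : br x Z = 0. Proof. exact: br_lcs1r lcs1Z. Qed.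

Lemma indepYZ s t : s *: Y + t *: Z = 0 -> s = 0 /\ t = 0.
Proof. exact: fam_mx_indepYZ fam_free. Qed.

Lemma lcs1_spanYZ W : in_lcs br 1 W -> exists s t, W = s *: Y + t *: Z.
Proof. exact: sub_dim2_span lcs1_dim lcs1Y lcs1Z indepYZ W. Qed.

Lemma al_lcs1_eq0 x W : in_lcs br 1 W -> al x Y = 0 -> al x Z = 0 -> al x W = 0.
Proof.
by move=> /lcs1_spanYZ [s [t ->]] xY xZ; rewrite alDr !alZr xY xZ !scaler0 addr0.
Qed.

Lemma al_cyclic x y z : al x (br y z) + al y (br z x) + al z (br x y) = 0.
Proof.
case: cocycle => _ _ /(_ z y x) + _; rewrite /d2 !al_invariant subrr !add0r.
rewrite (br_anti z y) (br_anti y x) !alNl !opprK !(al_anti (br _ _)) -!opprD.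
by move=> /eqP; rewrite oppr_eq0 => /eqP.
Qed.

Lemma alYZ : al Y Z = 0.
Proof.
move/eqP: (al_cyclic (X 1) (X 2) Z).
by rewrite brxZ brZx br12 !al0r !add0r al_anti oppr_eq0 => /eqP.
Qed.

Lemma fm_alYZ_sym x y : fm (al x Y) (al y Z) = fm (al x Z) (al y Y).
Proof.
case: cocycle => _ _ _ /(_ x y Y Z); rewrite /d3 /wedge22.
rewrite !brxY !brxZ !g0l alYZ fm0l fm0r.
have [s [t ->]] := lcs1_spanYZ (in_lcs1_br br x y).
rewrite gDl !gZl; have [-> _ _] := g_alt Y Z; have [_ -> _] := g_alt Z Y.
rewrite (fm_sym (al y Y)) (fm_sym (al y Z)); lra.
Qed.

Lemma alX3Y : al (X 3) Y = al (X 2) Z.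
Proof.
move/eqP: (al_cyclic (X 1) (X 2) (X 3)).
by rewrite br23 (br_anti (X 3)) br13 br12 al0r alNr add0r addrC subr_eq0 => /eqP.
Qed.

Lemma alX4Y : al (X 4) Y = - al (X 1) Z.
Proof.
move/eqP: (al_cyclic (X 1) (X 2) (X 4)).
by rewrite br24 (br_anti (X 4)) br14 oppr0 al0r addr0 br12 addrC addr_eq0 => /eqP.
Qed.

Lemma alXkY k : (5 <= k <= n)%N -> al (X k) Y = 0.
Proof.
move=> /br12k [br1k br2k]; have := al_cyclic (X 1) (X 2) (X k).
by rewrite br2k (br_anti (X k)) br1k oppr0 !al0r !add0r br12.
Qed.

Lemma alX3Z : al (X 3) Z = al (X 2) (br (X 3) (X 4)).
Proof.
move/eqP: (al_cyclic (X 2) (X 3) (X 4)).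
by rewrite (br_anti (X 4)) br24 br23 al0r addr0 alNr subr_eq0 eq_sym => /eqP.
Qed.

Lemma alX4Z : al (X 4) Z = - al (X 1) (br (X 3) (X 4)).
Proof.
move/eqP: (al_cyclic (X 1) (X 3) (X 4)).
by rewrite (br_anti (X 4)) br14 oppr0 al0r addr0 br13 addrC addr_eq0 => /eqP.
Qed.

Lemma alXkZ k : (5 <= k <= n)%N -> al (X k) Z = - al (X 1) (br (X 3) (X k)).
Proof.
move=> /br12k [br1k _]; move/eqP: (al_cyclic (X 1) (X 3) (X k)).
by rewrite (br_anti (X k)) br1k oppr0 al0r addr0 br13 addrC addr_eq0 => /eqP.
Qed.

Lemma alX2_br3k k : (5 <= k <= n)%N -> al (X 2) (br (X 3) (X k)) = 0.
Proof.
move=> /br12k [_ br2k]; have := al_cyclic (X 2) (X 3) (X k).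
by rewrite (br_anti (X k)) br2k oppr0 br23 !al0r !addr0.
Qed.

Lemma alX1_in_alY W : in_lcs br 1 W -> exists w, al (X 1) W = al w Y.
Proof.
move=> /lcs1_spanYZ [s [t ->]]; exists (s *: X 1 - t *: X 4).
by rewrite alDr !alZr alBl !alZl alX4Y scalerN opprK.
Qed.

Lemma alX2_in_alY W : in_lcs br 1 W -> exists w, al (X 2) W = al w Y.
Proof.
move=> /lcs1_spanYZ [s [t ->]]; exists (s *: X 2 + t *: X 3).
by rewrite alDr !alZr alDl !alZl alX3Y.
Qed.

Lemma alZ_in_alY v : exists w, al v Z = al w Y.
Proof.
move: v; apply: (fam_mx_ind fam_full).
- by exists 0; rewrite !al0l.
- by move=> a u v [wu uZ] [wv vZ]; exists (a *: wu + wv); rewrite !alDl !alZl uZ vZ.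
- apply: index_cases.
  + by exists (- X 4); rewrite alNl alX4Y opprK.
  + by exists (X 3); rewrite alX3Y.
  + by rewrite alX3Z; apply: alX2_in_alY; apply: in_lcs1_br.
  + rewrite alX4Z; have [w ->] := alX1_in_alY (in_lcs1_br br (X 3) (X 4)).
    by exists (- w); rewrite alNl.
  + move=> k k_ge5; rewrite alXkZ //.
    have [w ->] := alX1_in_alY (in_lcs1_br br (X 3) (X k)).
    by exists (- w); rewrite alNl.
- by exists 0; rewrite alYZ al0l.
- by exists 0; rewrite alxx al0l.
Qed.

(* (B_1) for the kernel element x (x) W, using alpha(l, l') <= alpha(l, Y). *)
Lemma al_orthY_eq0 x W : in_lcs br 1 W ->
  (forall i, (1 <= i <= n)%N -> fm (al x W) (al (X i) Y) = 0) -> al x W = 0.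
Proof.
move=> W_lcs1 orthX; set u := al x W.
have orthY : forall v, fm u (al v Y) = 0.
  apply: (fam_mx_ind fam_full) => //.
  - by rewrite al0l fm0r.
  - by move=> a v w vY wY; rewrite alDl alZl fmDr fmZr vY wY mulr0 addr0.
  - by rewrite alxx fm0r.
  - by rewrite (al_anti Z) alYZ oppr0 fm0r.
have orth_lcs1 v W' : in_lcs br 1 W' -> fm u (al v W') = 0.
  move=> /lcs1_spanYZ [s [t ->]]; rewrite alDr !alZr fmDr !fmZr.
  by have [w ->] := alZ_in_alY v; rewrite !orthY !mulr0 addr0.
apply: condB1 => [|w [s [s_lcs1 _ ->]]].
  exists [:: (x, W)]; rewrite !big_seq1; split => //; last exact: br_lcs1r.
  by move=> q; rewrite inE => /eqP ->.
rewrite big_seq; elim/big_rec: _ => [|q w' q_s orth_w']; first by rewrite fm0r.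
by rewrite fmDr orth_w' addr0 (orth_lcs1 _ _ (s_lcs1 _ q_s)).
Qed.

Lemma alXkZ_eq0 k : (5 <= k <= n)%N -> al (X k) Z = 0.
Proof.
move=> k_ge5; apply: al_orthY_eq0 lcs1Z _ => i _.
by rewrite -fm_alYZ_sym alXkY // fm0l.
Qed.

Lemma al_X12_br3k k : (5 <= k <= n)%N ->
  al (X 1) (br (X 3) (X k)) = 0 /\ al (X 2) (br (X 3) (X k)) = 0.
Proof.
move=> k_ge5; split; last exact: alX2_br3k.
by apply/eqP; rewrite -oppr_eq0 -alXkZ // alXkZ_eq0.
Qed.

Lemma al_isotropic_eq0 x1 W1 x2 W2 : in_lcs br 1 W1 -> in_lcs br 1 W2 ->
  fm (al x1 W1) (al x1 W1) = 0 -> fm (al x1 W1) (al x2 W2) = 0 ->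
  fm (al x2 W2) (al x2 W2) = 0 ->
  (forall i, (1 <= i <= n)%N -> span2 (al x1 W1) (al x2 W2) (al (X i) Y)) ->
  al x1 W1 = 0 /\ al x2 W2 = 0.
Proof.
move=> W1_lcs1 W2_lcs1 f11 f12 f22 spanY.
have orth_span u : fm u (al x1 W1) = 0 -> fm u (al x2 W2) = 0 ->
    forall i, (1 <= i <= n)%N -> fm u (al (X i) Y) = 0.
  by move=> u1 u2 i /spanY [r1 [r2 ->]]; rewrite fmDr !fmZr u1 u2 !mulr0 addr0.
by split; apply: al_orthY_eq0 => //; apply: orth_span; rewrite // fm_sym.
Qed.

Lemma g_cyclic_lcs1 x1 x2 x3 W : in_lcs br 1 W ->
  al x1 W = 0 -> al x2 W = 0 -> al x3 W = 0 ->
  g (br x1 x2) x3 W - g (br x1 x3) x2 W + g (br x2 x3) x1 W = 0.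
Proof.
move=> W_lcs1 a1 a2 a3; case: cocycle => _ _ _ /(_ x1 x2 x3 W).
by rewrite /d3 /wedge22 !(br_lcs1r _ W_lcs1) !g0l a1 a2 a3 !fm0l !fm0r; lra.
Qed.

Let gYxY x : g Y x Y = 0. Proof. by case: (g_alt Y x). Qed.
Let gZxY x : g Z x Y = - g x Z Y. Proof. exact: g_anti12. Qed.
Let gYxZ x : g Y x Z = g x Z Y. Proof. by rewrite g_anti12 g_anti23 opprK. Qed.
Let gZxZ x : g Z x Z = 0. Proof. by case: (g_alt Z x). Qed.

Lemma lcs1_scaleYZ c : in_lcs br 1 (c *: Y - Z).
Proof.
exists [:: (c *: X 1, X 2); (- X 1, X 3)]; split => //.
by rewrite !big_cons big_nil addr0 /= brZl brNl br12 br13.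
Qed.

Definition alZ_scaled c := forall i, (1 <= i <= n)%N -> al (X i) Z = c *: al (X i) Y.

Lemma al_scaleYZ_eq0 c : alZ_scaled c -> forall v, al v (c *: Y - Z) = 0.
Proof.
move=> alZ; apply: (fam_mx_ind fam_full).
- by rewrite al0l.
- by move=> a u v uL0 vL0; rewrite alDl alZl uL0 vL0 scaler0 addr0.
- by move=> i i_le; rewrite alDr alNr alZr alZ // subrr.
- by rewrite alDr alNr alZr alxx alYZ scaler0 subrr.
- by rewrite alDr alNr alZr alxx (al_anti Z) alYZ oppr0 scaler0 addr0.
Qed.

Lemma condA1_contra c A0 : alZ_scaled c ->
  ~ (forall i, (1 <= i <= n)%N -> g (X i) Z Y = fm A0 (al (X i) Y)).
Proof.
move=> alZ on_X; have al_L0 := al_scaleYZ_eq0 alZ.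
have on_all : forall v, g v Z Y = fm A0 (al v Y).
  apply: (fam_mx_ind fam_full) => //.
  - by rewrite g0l al0l fm0r.
  - by move=> a u v ug vg; rewrite gDl gZl ug vg alDl alZl fmDr fmZr.
  - by rewrite gYxY alxx fm0r.
  - by have [-> _ _] := g_alt Z Y; rewrite (al_anti Z) alYZ oppr0 fm0r.
have L0_center : in_center br (c *: Y - Z).
  by move=> y; rewrite brDl brNl brZl brYx brZx scaler0 oppr0 addr0.
have /indepYZ [_ /eqP] : c *: Y + (-1) *: Z = 0.
  rewrite scaleN1r; apply: (condA1 (conj L0_center (lcs1_scaleYZ c))).
  exists A0, (fun _ => 0); split => [a u v _ _|L]; first by rewrite mulr0 addr0.
  split=> [|y /lcs1_spanYZ [s [t ->]]]; first exact: al_L0.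
  have LZ : al L Z = c *: al L Y.
    by apply/eqP; rewrite eq_sym -subr_eq0 -alZr -alBr al_L0.
  rewrite gDr !gZr !gDm !gNm !gZm (g_anti23 L Y Z) on_all alDr !alZr LZ fmDr !fmZr.
  by have [_ _ ->] := g_alt Y L; have [_ _ ->] := g_alt Z L; ring.
by rewrite oppr_eq0 oner_eq0.
Qed.

Lemma gY_scaleYZ c x : g Y x (c *: Y - Z) = - g x Z Y.
Proof. by rewrite gDr gNr gZr gYxY mulr0 add0r gYxZ. Qed.

Lemma gZ_scaleYZ c x : g Z x (c *: Y - Z) = - (c * g x Z Y).
Proof. by rewrite gDr gNr gZr gZxY gZxZ oppr0 addr0 mulrN. Qed.

Lemma gZY_of_alZ_scaled c : alZ_scaled c ->
  [/\ g (X 3) Z Y = c * g (X 2) Z Y, g (X 4) Z Y = - c * g (X 1) Z Y &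
      forall k, (5 <= k <= n)%N -> g (X k) Z Y = 0].
Proof.
move=> alZ; have al_L0 := al_scaleYZ_eq0 alZ.
have cyc x1 x2 x3 := g_cyclic_lcs1 (lcs1_scaleYZ c) (al_L0 x1) (al_L0 x2) (al_L0 x3).
split.
- have := cyc (X 1) (X 2) (X 3).
  rewrite br12 br13 br23 g0l addr0 gY_scaleYZ gZ_scaleYZ; lra.
- have := cyc (X 1) (X 2) (X 4).
  rewrite br12 br14 br24 g0l subr0 gY_scaleYZ gZ_scaleYZ; lra.
- move=> k /br12k [br1k br2k]; have := cyc (X 1) (X 2) (X k).
  rewrite br12 br1k br2k !g0l subr0 addr0 gY_scaleYZ; lra.
Qed.

Lemma gZY_X12_eq0 : al (X 1) Y = 0 -> al (X 2) Y = 0 -> al (X 3) Y = 0 ->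
  al (X 4) Y = 0 -> g (X 1) Z Y = 0 /\ g (X 2) Z Y = 0.
Proof.
move=> a1 a2 a3 a4; split.
- have := g_cyclic_lcs1 lcs1Y a2 a4 a1.
  rewrite br24 (br_anti (X 2)) br12 (br_anti (X 4)) br14 oppr0 g0l gNl gZxY gYxY; lra.
- have := g_cyclic_lcs1 lcs1Y a1 a3 a2.
  rewrite br13 br12 (br_anti (X 3)) br23 oppr0 g0l gZxY gYxY; lra.
Qed.

(* The compatibility condition for representing gamma(., Z, Y) by [fm_solve2]. *)
Lemma gZY_compat c k a b : (5 <= k <= n)%N -> br (X 3) (X k) = a *: Y + b *: Z ->
  b != 0 -> al (X 3) Y = c *: al (X 2) Y -> g (X k) Z Y = 0 ->
  forall t1 t2, t1 *: al (X 1) Y + t2 *: al (X 2) Y = 0 ->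
  t1 * g (X 1) Z Y + t2 * g (X 2) Z Y = 0.
Proof.
move=> k_ge5 W_ab b_neq0 a3Y gk t1 t2 uY.
have [br1k br2k] := br12k k_ge5.
have wY : al (X 3 - c *: X 2) Y = 0 by rewrite alBl alZl a3Y subrr.
rewrite -alZl -alZl -alDl in uY.
have := g_cyclic_lcs1 lcs1Y uY (alXkY k_ge5) wY.
rewrite brDl !brZl br1k br2k !scaler0 addr0 g0l sub0r.
rewrite brDl !brZl !brBr !brZr br13 br12 br23 brxx scaler0 subrr scaler0 addr0.
rewrite (br_anti (X k)) W_ab (br_anti (X k) (X 2)) br2k oppr0 scaler0 subr0.
rewrite gZl gBl gZl gZxY gYxY gk gNl gDl !gZl gYxY gZxY gDl !gZl => e.
by apply: (mulfI b_neq0); rewrite mulr0; nra.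
Qed.

Lemma alX12_eq0_contra : al (X 1) Y = 0 -> al (X 2) Y = 0 ->
  al (X 1) Z = 0 -> al (X 2) Z = 0 -> False.
Proof.
move=> a1Y a2Y a1Z a2Z.
have alZ0 : alZ_scaled 0.
  apply: index_cases => [||||k k_ge5]; rewrite scale0r //.
  - by rewrite alX3Z (al_lcs1_eq0 (in_lcs1_br br _ _)).
  - by rewrite alX4Z (al_lcs1_eq0 (in_lcs1_br br _ _)) ?oppr0.
  - exact: alXkZ_eq0.
have [g3 g4 gk] := gZY_of_alZ_scaled alZ0.
have a3Y : al (X 3) Y = 0 by rewrite alX3Y.
have a4Y : al (X 4) Y = 0 by rewrite alX4Y a1Z oppr0.
have [g1 g2] := gZY_X12_eq0 a1Y a2Y a3Y a4Y.
apply: (condA1_contra (A0 := 0) alZ0).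
apply: index_cases => [||||k k_ge5]; rewrite fm0l //.
- by rewrite g3 g2 mulr0.
- by rewrite g4 g1 mulr0.
- exact: gk.
Qed.

Lemma alY_X12_eq0_contra : al (X 1) Y = 0 -> al (X 2) Y = 0 -> False.
Proof.
move=> a1Y a2Y.
have f11 : fm (al (X 1) Z) (al (X 1) Z) = 0.
  have := fm_alYZ_sym (X 1) (X 4); rewrite a1Y fm0l alX4Y fmNr.
  by move=> /eqP; rewrite eq_sym oppr_eq0 => /eqP.
have f12 : fm (al (X 1) Z) (al (X 2) Z) = 0.
  by have := fm_alYZ_sym (X 1) (X 3); rewrite a1Y fm0l alX3Y => <-.
have f22 : fm (al (X 2) Z) (al (X 2) Z) = 0.
  by have := fm_alYZ_sym (X 2) (X 3); rewrite a2Y fm0l alX3Y => <-.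
have [|a1Z a2Z] := al_isotropic_eq0 lcs1Z lcs1Z f11 f12 f22.
  apply: index_cases => [||||k k_ge5].
  - by rewrite a1Y; apply: span2_0.
  - by rewrite a2Y; apply: span2_0.
  - by rewrite alX3Y; apply: span2_2.
  - by rewrite alX4Y; apply: span2N; apply: span2_1.
  - by rewrite (alXkY k_ge5); apply: span2_0.
exact: alX12_eq0_contra a1Y a2Y a1Z a2Z.
Qed.

Section ScaledAlphaX12.
Variables (c a34 b34 : R).
Hypothesis br34 : br (X 3) (X 4) = a34 *: Y + b34 *: Z.
Hypothesis a1Z : al (X 1) Z = c *: al (X 1) Y.
Hypothesis a2Z : al (X 2) Z = c *: al (X 2) Y.

(* With kappa := a34 + b34 c - c^2, alpha(., Z) - c alpha(., Y) vanishes at X1, X2 and Xk,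
   and equals kappa alpha(X2, Y), - kappa alpha(X1, Y) at X3, X4. *)
Let a3Y : al (X 3) Y = c *: al (X 2) Y. Proof. by rewrite alX3Y. Qed.
Let a4Y : al (X 4) Y = - (c *: al (X 1) Y). Proof. by rewrite alX4Y a1Z. Qed.
Let a3Z : al (X 3) Z = (a34 + b34 * c) *: al (X 2) Y.
Proof. by rewrite alX3Z br34 alDr !alZr a2Z scalerA -scalerDl. Qed.
Let a4Z : al (X 4) Z = - ((a34 + b34 * c) *: al (X 1) Y).
Proof. by rewrite alX4Z br34 alDr !alZr a1Z scalerA -scalerDl. Qed.

Lemma scaled_isotropic_contra : a34 + b34 * c - c * c != 0 -> False.
Proof.
move=> k_neq0.
have cancel_kappa f : (a34 + b34 * c) * f = c * (c * f) -> f = 0.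
  by move=> e; apply: (mulfI k_neq0); rewrite mulr0 mulrBl e mulrA subrr.
have f11 : fm (al (X 1) Y) (al (X 1) Y) = 0.
  apply: cancel_kappa; have := fm_alYZ_sym (X 1) (X 4).
  by rewrite a4Z a1Z a4Y !fmNr !fmZr !fmZl => /eqP; rewrite eqr_opp => /eqP.
have f12 : fm (al (X 1) Y) (al (X 2) Y) = 0.
  by apply: cancel_kappa; have := fm_alYZ_sym (X 1) (X 3); rewrite a3Z a1Z a3Y !fmZr !fmZl.
have f22 : fm (al (X 2) Y) (al (X 2) Y) = 0.
  by apply: cancel_kappa; have := fm_alYZ_sym (X 2) (X 3); rewrite a3Z a2Z a3Y !fmZr !fmZl.
have [|a1Y a2Y] := al_isotropic_eq0 lcs1Y lcs1Y f11 f12 f22.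
  apply: index_cases => [||||k k_ge5].
  - exact: span2_1.
  - exact: span2_2.
  - by rewrite a3Y; apply: span2Z; apply: span2_2.
  - by rewrite a4Y; apply: span2N; apply: span2Z; apply: span2_1.
  - by rewrite (alXkY k_ge5); apply: span2_0.
exact: alY_X12_eq0_contra a1Y a2Y.
Qed.

Lemma scaled_proportional_contra k a b : (5 <= k <= n)%N ->
  br (X 3) (X k) = a *: Y + b *: Z -> b != 0 -> a34 + b34 * c - c * c = 0 -> False.
Proof.
move=> k_ge5 W_ab b_neq0 /subr0_eq k0.
have alZc : alZ_scaled c.
  apply: index_cases => [||||m m_ge5] //.
  - by rewrite a3Z a3Y scalerA k0.
  - by rewrite a4Z a4Y scalerN scalerA k0.
  - by rewrite alXkZ_eq0 // alXkY // scaler0.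
have [g3 g4 gk] := gZY_of_alZ_scaled alZc.
have [A0 [A0_1 A0_2]] := fm_solve2 (gZY_compat k_ge5 W_ab b_neq0 a3Y (gk _ k_ge5)).
apply: (condA1_contra (A0 := A0) alZc); apply: index_cases => [||||m m_ge5].
- by rewrite A0_1.
- by rewrite A0_2.
- by rewrite g3 a3Y fmZr A0_2.
- by rewrite g4 a4Y fmNr fmZr A0_1 mulNr.
- by rewrite gk // alXkY // fm0r.
Qed.

End ScaledAlphaX12.

Lemma br3k_eq0 k : (5 <= k <= n)%N -> br (X 3) (X k) = 0.
Proof.
move=> k_ge5; have [a [b W_ab]] := lcs1_spanYZ (in_lcs1_br br (X 3) (X k)).
have [] := al_X12_br3k k_ge5; rewrite W_ab !alDr !alZr => a1W a2W.
have [a34 [b34 br34]] := lcs1_spanYZ (in_lcs1_br br (X 3) (X 4)).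
have [b0|b_neq0] := eqVneq b 0.
  have [a0|a_neq0] := eqVneq a 0; first by rewrite a0 b0 !scale0r addr0.
  move: a1W a2W; rewrite b0 !scale0r !addr0 => a1W a2W; exfalso.
  by apply: alY_X12_eq0_contra; apply: (scalerI a_neq0); rewrite scaler0.
exfalso; have a1Z := scale_solve b_neq0 a1W; have a2Z := scale_solve b_neq0 a2W.
have [k0|k_neq0] := eqVneq (a34 + b34 * (- a / b) - (- a / b) * (- a / b)) 0.
  apply: (scaled_proportional_contra br34 a1Z a2Z k_ge5 W_ab b_neq0 k0).
exact: scaled_isotropic_contra br34 a1Z a2Z k_neq0.
Qed.

End AdmissibleCocycle.

Theorem lemma8 (R : realType) (d n : nat)
    (br : 'rV[R]_d -> 'rV[R]_d -> 'rV[R]_d)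
    (X : nat -> 'rV[R]_d) (Y Z : 'rV[R]_d) :
  (4 <= n)%N ->
  lie_algebra br ->
  nilpotent_lie br ->
  admissible_lie br ->
  sub_dim (in_lcs br 1) 2 ->
  (forall x, in_lcs br 1 x -> in_center br x) ->
  row_free (fam_mx n X Y Z) -> row_full (fam_mx n X Y Z) ->
  br (X 1%N) (X 2%N) = Y ->
  br (X 1%N) (X 3%N) = Z ->
  br (X 2%N) (X 3%N) = 0 ->
  br (X 1%N) (X 4%N) = 0 ->
  br (X 2%N) (X 4%N) = Z ->
  (forall j, (5 <= j <= n)%N -> br (X 1%N) (X j) = 0 /\ br (X 2%N) (X j) = 0) ->
  forall j, (5 <= j <= n)%N -> br (X 3%N) (X j) = 0.
Proof.
move=> _ lie _ [p [fm [act [al [g [orth _ cocycle al_inv adm]]]]]] lcs1_dim lcs1_central.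
have [condA1 condB1] := adm 1%N (lcs2_eq0 lie lcs1_central) 1%N (leqnn 1).
exact: br3k_eq0 lie orth cocycle al_inv condA1 condB1 lcs1_dim lcs1_central.
Qed.
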